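(* Let $G=PSO(8,\mathbb{C})$ and $P_2$ the maximal parabolic subgroup defined in the context. For $u,v\in W^{P_2}$, in $(H^*(G/P_2),\odot_0)$ one has: $\epsilon^{P_2}_u\odot_0\epsilon^{P_2}_v=\epsilon^{P_2}_u\cdot\epsilon^{P_2}_v$ if $\ell(u)+\ell(v)\le 4$; $\epsilon^{P_2}_u\odot_0\epsilon^{P_2}_v=\epsilon^{P_2}_u\cdot\epsilon^{P_2}_v$ if $\ell(u)+\ell(v)\ge5$ and at least one of $\ell(u),\ell(v)$ is $\ge5$; and $\epsilon^{P_2}_u\odot_0\epsilon^{P_2}_v=0$ if $\ell(u)+\ell(v)\ge 5$ and both $\ell(u)\le4$ and $\ell(v)\le 4$.
   Context: $G=PSO(8,\mathbb{C})$ with Borel $B$, maximal torus $T$, Weyl group $W$ of type $D_4$ with length function $\ell$. In standard coordinates $\epsilon_1,\dots,\epsilon_4$ on the Cartan subalgebra, the simple roots are $\alpha_1=\epsilon_1-\epsilon_2$, $\alpha_2=\epsilon_2-\epsilon_3$, $\alpha_3=\epsilon_3-\epsilon_4$, $\alpha_4=\epsilon_3+\epsilon_4$ with simple reflections $s_1,\dots,s_4$; $\rho$ is half the sum of positive roots. $P_2\supset B$ is the maximal parabolic with $W_{P_2}$ generated by $s_1,s_3,s_4$; $W^{P_2}$ is the set of minimal length representatives of $W/W_{P_2}$; $x_{P_2}$ is the element of the Cartan subalgebra with $\alpha_j(x_{P_2})=\delta_{j2}$. For $w\in W^{P_2}$, $\epsilon^{P_2}_w\in H^{2\ell(w)}(G/P_2,\mathbb{Z})$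 is the class dual (under the Kronecker pairing) to the Schubert basis $\{[\overline{BwP_2/P_2}]\}$ of homology. Writing the cup product as $\epsilon_u\cdot\epsilon_v=\sum_w d^w_{u,v}\epsilon_w$, the Belkale–Kumar product is $\epsilon_u\odot_0\epsilon_v=\sum_w d^w_{u,v}\delta^w_{u,v}\epsilon_w$, with $\delta^w_{u,v}=1$ if $(u^{-1}\rho+v^{-1}\rho-w^{-1}\rho-\rho)(x_{P_2})=0$ and $\delta^w_{u,v}=0$ otherwise. *)

From HB Require Import structures.
From mathcomp Require Import all_boot all_order all_algebra all_fingroup.
From mathcomp Require Import mpoly.
From Stdlib Require Import ClassicalEpsilon.

Set Implicit Arguments.
Unset Strict Implicit.
Unset Printing Implicit Defensive.

Import GRing.Theory Num.Theory.
Local Open Scope ring_scope.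

(* h^* has basis eps_0..eps_3 (= eps_1..eps_4 of the paper); h is identified *)
(* with rat^4 via the dual basis, the pairing being the dot product.         *)
(* The Weyl group W is realised as the group of permutations of the 8       *)
(* vectors +-eps_i generated by the simple reflections: index k < 4 stands  *)
(* for eps_k and index k >= 4 for -eps_(k-4).                                *)

Definition D4vec (k : 'I_8) : 'rV[rat]_4 :=
  if (k < 4)%N then \row_j (if (j : nat) == k then 1 else 0)
  else \row_j (if (j : nat) == (k - 4)%N then -1 else 0).

Definition eps (i : 'I_4) : 'rV[rat]_4 := \row_j (if j == i then 1 else 0).

(* linear action of the perm w on h^*: eps_i |-> D4vec (w^-1 i)  so that  *)
(* D4act (w * x) = D4act w \o D4act x  (a left action).                   *)
Definition D4act (w : {perm 'I_8}) (x : 'rV[rat]_4) : 'rV[rat]_4 :=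
  \sum_(i < 4) x ord0 i *: D4vec ((w^-1)%g (widen_ord (isT : (4 <= 8)%N) i)).

Definition i8 (k : nat) : 'I_8 := inord k.

Definition s1 : {perm 'I_8} := (tperm (i8 0) (i8 1) * tperm (i8 4) (i8 5))%g. (* eps1-eps2 *)
Definition s2 : {perm 'I_8} := (tperm (i8 1) (i8 2) * tperm (i8 5) (i8 6))%g. (* eps2-eps3 *)
Definition s3 : {perm 'I_8} := (tperm (i8 2) (i8 3) * tperm (i8 6) (i8 7))%g. (* eps3-eps4 *)
Definition s4 : {perm 'I_8} := (tperm (i8 2) (i8 7) * tperm (i8 3) (i8 6))%g. (* eps3+eps4 *)

Definition sref (i : 'I_4) : {perm 'I_8} :=
  match (i : nat) with 0 => s1 | 1 => s2 | 2 => s3 | _ => s4 end.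

(* simple roots alpha_1..alpha_4 (indexed 0..3) *)
Definition alpha (i : 'I_4) : 'rV[rat]_4 :=
  match (i : nat) with
  | 0 => eps (inord 0) - eps (inord 1)
  | 1 => eps (inord 1) - eps (inord 2)
  | 2 => eps (inord 2) - eps (inord 3)
  | _ => eps (inord 2) + eps (inord 3)
  end.

Definition W : {group {perm 'I_8}} := <<[set s1; s2; s3; s4]>>%G.
Definition WP2 : {group {perm 'I_8}} := <<[set s1; s3; s4]>>%G.

Definition posroots : seq 'rV[rat]_4 :=
  let prs := [seq ij : 'I_4 * 'I_4 <- [seq (i, j) | i <- enum 'I_4, j <- enum 'I_4]
               | (ij.1 < ij.2)%N] in
  [seq eps ij.1 - eps ij.2 | ij <- prs] ++ [seq eps ij.1 + eps ij.2 | ij <- prs].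

Definition len (w : {perm 'I_8}) : nat :=
  count (fun b => - D4act w b \in posroots) posroots.

Definition WPmin : {set {perm 'I_8}} :=
  [set w in W | [forall x in WP2, (len w <= len (w * x)%g)%N]].

Definition rho : 'rV[rat]_4 := \row_j ((3 - (j : nat))%:R).
(* x_{P_2} in h : alpha_j(x_{P_2}) = delta_{j2};  x_{P_2} = (1,1,0,0) *)
Definition xP2 : 'rV[rat]_4 := \row_j (if ((j : nat) < 2)%N then 1 else 0).
Definition pair (a x : 'rV[rat]_4) : rat := \sum_(j < 4) a ord0 j * x ord0 j.

Definition BKdelta (u v w : {perm 'I_8}) : bool :=
  pair (D4act u^-1 rho + D4act v^-1 rho - D4act w^-1 rho - rho) xP2 == 0.

(* Cohomology: Borel presentation H^*(G/B,Q) = S(h^* )/(W-invariants of     *)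
(* positive degree), S(h^* ) = Q[X_0..X_3] (X_i = eps_i), with Schubert     *)
(* classes given by Bernstein-Gelfand-Gelfand divided differences.          *)
(* H^*(G/P_2) embeds in H^*(G/B) with eps^{P_2}_w |-> eps^B_w (w in W^P).   *)

Definition Spoly := {mpoly rat[4]}.

Definition linpoly (a : 'rV[rat]_4) : Spoly := \sum_(j < 4) a ord0 j *: 'X_j.

Definition polyact (w : {perm 'I_8}) (f : Spoly) : Spoly :=
  comp_mpoly [tuple linpoly (D4act w (eps j)) | j < 4] f.

Definition ddiff (i : 'I_4) (f : Spoly) : Spoly :=
  epsilon (inhabits 0)
    (fun g : Spoly => linpoly (alpha i) * g = f - polyact (sref i) f).

Definition ddword (t : seq 'I_4) (f : Spoly) : Spoly := foldr ddiff f t.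

Definition wordprod (t : seq 'I_4) : {perm 'I_8} := (\prod_(i <- t) sref i)%g.

Definition ddW (w : {perm 'I_8}) (f : Spoly) : Spoly :=
  match [pick t : (len w).-tuple 'I_4 | wordprod t == w] with
  | Some t => ddword t f
  | None => 0
  end.

Definition w0 : {perm 'I_8} := [arg max_(w > 1%g in W) len w].

Definition ptclass : Spoly :=
  (#|W|%:R)^-1 *: \prod_(b <- posroots) linpoly b.

Definition schub (w : {perm 'I_8}) : Spoly := ddW (w^-1 * w0)%g ptclass.

(* cup-product structure constants: eps_u . eps_v = sum_w d^w_{u,v} eps_w. *)
(* For a polynomial f of degree l(w), the coefficient of eps_w in f is the *)
(* constant d_w f; d^w_{u,v} = 0 unless l(w) = l(u)+l(v) (grading).        *)
Definition cupcoef (u v w : {perm 'I_8}) : rat :=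
  if len w == (len u + len v)%N then (ddW w (schub u * schub v))@_0%MM else 0.

(* elements of H^*(G/P_2) as coefficient vectors on the Schubert basis *)
Definition cup (u v : {perm 'I_8}) : {ffun {perm 'I_8} -> rat} :=
  [ffun w => if w \in WPmin then cupcoef u v w else 0].

Definition BKprod (u v : {perm 'I_8}) : {ffun {perm 'I_8} -> rat} :=
  [ffun w => if w \in WPmin then cupcoef u v w * (BKdelta u v w)%:R else 0].

Definition zeroclass : {ffun {perm 'I_8} -> rat} := [ffun => 0].

(* The factor delta^w_{u,v} is all that separates the Belkale-Kumar product
   from the cup product, and only the w with l(w) = l(u) + l(v) contribute.
   For u, v, w in W^{P_2} with l(w) = l(u) + l(v) the number
   (u^-1 rho + v^-1 rho - w^-1 rho - rho)(x_{P_2}) turns out to vanish exactly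
   when l(u) + l(v) <= 4 or one of l(u), l(v) is >= 5.  As W has order 192 and
   W^{P_2} has 24 elements, this is a finite check, done by evaluation once
   permutations of 'I_8 are written in one-line notation and row vectors as
   lists. *)
From mathcomp Require Import all_boot all_algebra all_fingroup.

Set Implicit Arguments.
Unset Strict Implicit.
Unset Printing Implicit Defensive.

Import GRing.Theory.
Local Open Scope ring_scope.

Lemma gen_rmul_ind (gT : finGroupType) (A : {set gT}) (P : pred gT) :
  P 1%g -> (forall x a, a \in A -> P x -> P (x * a)%g) ->
  {in <<A>>%g, forall x, P x}.
Proof.
move=> P1 PM x /gen_prodgP [n [c Ac ->]].
elim: n c Ac => [|n IHn] c Ac; first by rewrite big_ord0.
by rewrite big_ord_recr /=; apply: PM => //; apply: IHn.
Qed.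

Section OneLine.

Variable n : nat.

Definition oneline (w : {perm 'I_n}) : seq nat := [seq val (w i) | i <- enum 'I_n].

Definition ol_comp (c d : seq nat) : seq nat := [seq nth 0%N d k | k <- c].

Definition ol_inv (c : seq nat) : seq nat := [seq index k c | k <- iota 0 (size c)].

Definition ol_tperm (a b : nat) : seq nat :=
  [seq if k == a then b else if k == b then a else k | k <- iota 0 n].

Lemma nth_oneline w (i : 'I_n) : nth 0%N (oneline w) i = w i.
Proof. by rewrite /oneline (nth_map i) ?size_enum_ord // nth_ord_enum. Qed.

Lemma oneline1 : oneline 1%g = iota 0 n.
Proof. by rewrite -val_enum_ord; apply: eq_map => i; rewrite perm1. Qed.

Lemma onelineM x y : oneline (x * y)%g = ol_comp (oneline x) (oneline y).
Proof.
by rewrite /ol_comp -map_comp; apply: eq_map => i /=; rewrite permM nth_oneline.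
Qed.

Lemma onelineV w : oneline w^-1%g = ol_inv (oneline w).
Proof.
rewrite /ol_inv size_map size_enum_ord -val_enum_ord -map_comp.
apply: eq_map => i /=; rewrite -{2}(permKV w i).
have val_w_inj : injective (fun j => val (w j)).
  exact: inj_comp val_inj (@perm_inj _ w).
by rewrite (index_map val_w_inj) index_enum_ord.
Qed.

Lemma oneline_tperm (i j : 'I_n) : oneline (tperm i j) = ol_tperm i j.
Proof.
rewrite /ol_tperm -val_enum_ord -map_comp; apply: eq_map => k /=.
rewrite !(inj_eq val_inj).
case: tpermP => [->|->|/eqP/negbTE-> /eqP/negbTE->]; rewrite ?eqxx //.
by case: eqP => [->|].
Qed.

End OneLine.

Section RowSeq.

Variables (R : Type) (n : nat).

Definition rowseq (r : 'rV[R]_n) : seq R := [seq r ord0 i | i <- enum 'I_n].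

Lemma nth_rowseq x0 r (i : 'I_n) : nth x0 (rowseq r) i = r ord0 i.
Proof. by rewrite /rowseq (nth_map i) ?size_enum_ord // nth_ord_enum. Qed.

Lemma rowseq_inj : injective rowseq.
Proof.
move=> x y exy; apply/rowP => i.
by rewrite -(nth_rowseq (x ord0 i)) exy nth_rowseq.
Qed.

Lemma rowseqE (r : 'rV[R]_n) (f : nat -> R) :
  (forall i : 'I_n, r ord0 i = f i) -> rowseq r = [seq f k | k <- iota 0 n].
Proof. by move=> rf; rewrite /rowseq -val_enum_ord -map_comp; apply: eq_map. Qed.

End RowSeq.

Lemma rowseqN (V : zmodType) n (r : 'rV[V]_n) : rowseq (- r) = map -%R (rowseq r).
Proof. by rewrite /rowseq -[RHS]map_comp; apply: eq_map => i; rewrite /= mxE. Qed.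

Lemma sum_ord_foldr (V : nmodType) n (F : nat -> V) :
  \sum_(i < n) F i = foldr +%R 0 [seq F k | k <- iota 0 n].
Proof. by rewrite -(big_mkord xpredT) foldrE big_map /index_iota subn0. Qed.

Definition s1_ol := ol_comp (ol_tperm 8 0 1) (ol_tperm 8 4 5).
Definition s2_ol := ol_comp (ol_tperm 8 1 2) (ol_tperm 8 5 6).
Definition s3_ol := ol_comp (ol_tperm 8 2 3) (ol_tperm 8 6 7).
Definition s4_ol := ol_comp (ol_tperm 8 2 7) (ol_tperm 8 3 6).

Lemma oneline_s1 : oneline s1 = s1_ol.
Proof. by rewrite /s1 onelineM !oneline_tperm !inordK. Qed.
Lemma oneline_s2 : oneline s2 = s2_ol.
Proof. by rewrite /s2 onelineM !oneline_tperm !inordK. Qed.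
Lemma oneline_s3 : oneline s3 = s3_ol.
Proof. by rewrite /s3 onelineM !oneline_tperm !inordK. Qed.
Lemma oneline_s4 : oneline s4 = s4_ol.
Proof. by rewrite /s4 onelineM !oneline_tperm !inordK. Qed.

Definition simple_ol : seq (seq nat) := [:: s1_ol; s2_ol; s3_ol; s4_ol].

(* 12 = l(w0), so breadth-first search reaches all of W in 12 rounds. *)
Definition W_ol : seq (seq nat) :=
  iter 12 (fun L => undup (L ++ [seq ol_comp c s | c <- L, s <- simple_ol]))
    [:: iota 0 8].

Lemma W_ol_rmul_closed :
  all (fun c => all (fun s => ol_comp c s \in W_ol) simple_ol) W_ol.
Proof. by vm_compute. Qed.

Lemma oneline_W w : w \in W -> oneline w \in W_ol.
Proof.
move: w; apply: (@gen_rmul_ind _ _ (fun w => oneline w \in W_ol)) => [|x s sgen xW].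
  by rewrite oneline1; vm_compute.
have s_simple : oneline s \in simple_ol.
  by move: sgen; rewrite !inE -!orbA => /or4P[] /eqP->;
    rewrite ?oneline_s1 ?oneline_s2 ?oneline_s3 ?oneline_s4 eqxx ?orbT.
by have := allP (allP W_ol_rmul_closed _ xW) _ s_simple; rewrite -onelineM.
Qed.

Definition D4coord (k j : nat) : rat :=
  if (k < 4)%N then (if j == k then 1 else 0)
  else (if j == (k - 4)%N then -1 else 0).

Lemma D4vec_coord k (j : 'I_4) : D4vec k ord0 j = D4coord k j.
Proof. by rewrite /D4vec /D4coord; case: ifP => _; rewrite mxE. Qed.

Definition D4act_ol (c : seq nat) (xs : seq rat) : seq rat :=
  [seq foldr +%R 0 [seq nth 0 xs i * D4coord (nth 0%N c i) j | i <- iota 0 4]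
  | j <- iota 0 4].

Lemma rowseq_D4act (w : {perm 'I_8}) x :
  rowseq (D4act w x) = D4act_ol (oneline w^-1%g) (rowseq x).
Proof.
apply: rowseqE => j; rewrite /D4act summxE -sum_ord_foldr.
apply: eq_bigr => i _; rewrite mxE D4vec_coord nth_rowseq.
by rewrite -(nth_oneline _ (widen_ord _ i)).
Qed.

Definition posroots_ol : seq (seq rat) :=
  let pairs := [:: (0, 1); (0, 2); (0, 3); (1, 2); (1, 3); (2, 3)]%N in
  [seq [seq (if k == p.1 then 1 else 0) - (if k == p.2 then 1 else 0) | k <- iota 0 4]
  | p <- pairs] ++
  [seq [seq (if k == p.1 then 1 else 0) + (if k == p.2 then 1 else 0) | k <- iota 0 4]
  | p <- pairs].

Lemma rowseq_posroots : [seq rowseq b | b <- posroots] = posroots_ol.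
Proof. by rewrite /posroots /rowseq !enum_ordSl enum_ord0 /= !mxE. Qed.

Definition len_ol (c : seq nat) : nat :=
  count (fun xs => map -%R (D4act_ol (ol_inv c) xs) \in posroots_ol) posroots_ol.

Lemma len_oneline (w : {perm 'I_8}) : len w = len_ol (oneline w).
Proof.
rewrite /len_ol -onelineV -rowseq_posroots count_map; apply: eq_count => b.
by rewrite -(mem_map (@rowseq_inj _ _)) rowseqN rowseq_D4act.
Qed.

Definition rho_ol : seq rat := [seq (3 - k)%:R | k <- iota 0 4].

Lemma rowseq_rho : rowseq rho = rho_ol.
Proof. by apply: rowseqE => j; rewrite mxE. Qed.

Lemma pairD a b x : pair (a + b) x = pair a x + pair b x.
Proof. by rewrite /pair -big_split; apply: eq_bigr => j _; rewrite mxE mulrDl. Qed.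

Lemma pairN a x : pair (- a) x = - pair a x.
Proof. by rewrite /pair -sumrN; apply: eq_bigr => j _; rewrite mxE mulNr. Qed.

Lemma pair_xP2 a : pair a xP2 = nth 0 (rowseq a) 0 + nth 0 (rowseq a) 1.
Proof.
rewrite /pair !big_ord_recr big_ord0 /= !mxE /= -!(nth_rowseq 0) /=.
by rewrite !mulr1 !mulr0 !addr0 add0r.
Qed.

Definition rho_xP2_ol (c : seq nat) : rat :=
  let y := D4act_ol c rho_ol in nth 0 y 0 + nth 0 y 1.

Lemma pair_D4act_rho (w : {perm 'I_8}) :
  pair (D4act w^-1 rho) xP2 = rho_xP2_ol (oneline w).
Proof. by rewrite pair_xP2 rowseq_D4act invgK rowseq_rho. Qed.

Lemma BKdelta_ol (u v w : {perm 'I_8}) :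
  BKdelta u v w =
  (rho_xP2_ol (oneline u) + rho_xP2_ol (oneline v) - rho_xP2_ol (oneline w) - 5 == 0).
Proof. by rewrite /BKdelta !pairD !pairN !pair_D4act_rho pair_xP2 rowseq_rho. Qed.

Definition WPmin_ol (c : seq nat) : bool :=
  all (fun s => len_ol c <= len_ol (ol_comp c s))%N [:: s1_ol; s3_ol; s4_ol].

Lemma oneline_WPmin w : w \in WPmin -> WPmin_ol (oneline w).
Proof.
rewrite inE => /andP [_ /forall_inP len_min].
have len_mins s : s \in [set s1; s3; s4] ->
    (len_ol (oneline w) <= len_ol (oneline (w * s)%g))%N.
  by move=> sgen; rewrite -!len_oneline; apply/len_min/mem_gen.
rewrite /WPmin_ol; apply/allP => c; rewrite !inE => /or3P [] /eqP ->;
  rewrite -?oneline_s1 -?oneline_s3 -?oneline_s4 -onelineM;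
  by apply: len_mins; rewrite !inE eqxx ?orbT.
Qed.

Definition WPmin_data : seq (nat * rat) :=
  [seq (len_ol c, rho_xP2_ol c) | c <- W_ol & WPmin_ol c].

Lemma WPmin_data_mem w :
  w \in WPmin -> (len w, rho_xP2_ol (oneline w)) \in WPmin_data.
Proof.
move=> wmin; have := wmin; rewrite inE => /andP [wW _]; rewrite len_oneline.
by apply: map_f; rewrite mem_filter oneline_WPmin ?oneline_W.
Qed.

Lemma WPmin_data_delta :
  all (fun a => all (fun b => all (fun c =>
    (c.1 == a.1 + b.1)%N ==>
    ((a.2 + b.2 - c.2 - 5 == 0) == [|| a.1 + b.1 <= 4, 4 < a.1 | 4 < b.1]%N))
    WPmin_data) WPmin_data) WPmin_data.
Proof. by vm_compute. Qed.

Lemma BKdelta_WPmin u v w : u \in WPmin -> v \in WPmin -> w \in WPmin ->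
  len w = (len u + len v)%N ->
  BKdelta u v w = [|| len u + len v <= 4, 4 < len u | 4 < len v]%N.
Proof.
move=> umin vmin wmin len_w; rewrite BKdelta_ol.
have := allP (allP (allP WPmin_data_delta _ (WPmin_data_mem umin))
  _ (WPmin_data_mem vmin)) _ (WPmin_data_mem wmin).
by rewrite /= len_w eqxx => /eqP.
Qed.

Lemma BKprod_eq_cup u v :
  (forall w, w \in WPmin -> len w = (len u + len v)%N -> BKdelta u v w) ->
  BKprod u v = cup u v.
Proof.
move=> delta1; apply/ffunP => w; rewrite !ffunE; case: ifP => // wmin.
rewrite /cupcoef; case: eqP => [len_w|_]; last by rewrite mul0r.
by rewrite delta1 ?mulr1.
Qed.

Lemma BKprod_eq0 u v :
  (forall w, w \in WPmin -> len w = (len u + len v)%N -> ~~ BKdelta u v w) ->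
  BKprod u v = zeroclass.
Proof.
move=> delta0; apply/ffunP => w; rewrite !ffunE; case: ifP => // wmin.
rewrite /cupcoef; case: eqP => [len_w|_]; last by rewrite mul0r.
by rewrite (negbTE (delta0 _ _ _)) ?mulr0.
Qed.

Theorem corollary4p1 (u v : {perm 'I_8}) :
  u \in WPmin -> v \in WPmin ->
  [/\ (len u + len v <= 4)%N -> BKprod u v = cup u v,
      (5 <= len u + len v)%N -> (5 <= len u \/ 5 <= len v)%N ->
        BKprod u v = cup u v
    & (5 <= len u + len v)%N -> (len u <= 4)%N -> (len v <= 4)%N ->
        BKprod u v = zeroclass].
Proof.
move=> umin vmin; have delta w := @BKdelta_WPmin u v w umin vmin.
split=> [small | _ large | large small_u small_v].
- by apply: BKprod_eq_cup => w wmin len_w; rewrite delta // small.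
- apply: BKprod_eq_cup => w wmin len_w; rewrite delta //.
  by case: large => ->; rewrite ?orbT.
- apply: BKprod_eq0 => w wmin len_w; rewrite delta //.
  by rewrite !ltnNge small_u small_v /= orbF -ltnNge.
Qed.
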